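(* If $G$ and $G'$ are two distinct acyclic subgraphs of $K_{n,d}$ with $LD(G)=LD(G')$ and $RD(G)=RD(G')$, then $G$ and $G'$ are not compatible.
   Context: Fix positive integers $n,d$. $K_{n,d}$ denotes the complete bipartite graph with left vertex set $[n]=\{1,\dots,n\}$ and right vertex set $[\bar d]=\{\bar 1,\dots,\bar d\}$; all graphs considered are subgraphs of $K_{n,d}$ (identified with their edge sets). For a subgraph $G$, $LD(G)\in\mathbb Z_{\ge0}^{[n]}$ is the vector of degrees of the left vertices and $RD(G)\in\mathbb Z_{\ge 0}^{[\bar d]}$ the vector of degrees of the right vertices. Two acyclic subgraphs $G,G'$ are called compatible if whenever both contain a perfect matching between the same pair of vertex sets $I\subseteq[n]$ and $\bar J\subseteq[\bar d]$, these two matchings are equal. *)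

From mathcomp Require Import all_boot.
Set Implicit Arguments. Unset Strict Implicit. Unset Printing Implicit Defensive.

(* Subgraphs of K_{n,d}: sets of edges (i, j) with i a left vertex in 'I_n
   (standing for [n]) and j a right vertex in 'I_d (standing for [\bar d]). *)
Definition graph (n d : nat) := {set 'I_n * 'I_d}.

Definition LD n d (G : graph n d) : 'I_n -> nat :=
  fun i => #|[set e in G | e.1 == i]|.
Definition RD n d (G : graph n d) : 'I_d -> nat :=
  fun j => #|[set e in G | e.2 == j]|.

(* A cycle of length 2k (k >= 2) in a bipartite graph: pairwise distinct left
   vertices l_0..l_{k-1} and pairwise distinct right vertices r_0..r_{k-1}
   with edges l_t -- r_t and l_{t+1 mod k} -- r_t. *)
Definition cyc_succ k (t : 'I_k) : 'I_k :=
  Ordinal (ltn_pmod t.+1 (leq_ltn_trans (leq0n t) (ltn_ord t))).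

Definition has_cycle n d (G : graph n d) : Prop :=
  exists k (l : 'I_k -> 'I_n) (r : 'I_k -> 'I_d),
    1 < k /\ injective l /\ injective r /\
    forall t : 'I_k,
      (l t, r t) \in G /\
      (l (cyc_succ t), r t) \in G.

Definition acyclic n d (G : graph n d) : Prop := ~ has_cycle G.

Definition perfect_matching n d (M : graph n d) (I : {set 'I_n}) (J : {set 'I_d}) :=
  [/\ forall e, e \in M -> (e.1 \in I) && (e.2 \in J),
      forall i, i \in I -> #|[set e in M | e.1 == i]| = 1
    & forall j, j \in J -> #|[set e in M | e.2 == j]| = 1].

Definition contains_pm n d (G M : graph n d) I J :=
  M \subset G /\ perfect_matching M I J.

Definition compatible n d (G G' : graph n d) : Prop :=
  forall (I : {set 'I_n}) (J : {set 'I_d}) (M M' : graph n d),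
    contains_pm G M I J -> contains_pm G' M' I J -> M = M'.

(* Since the degree vectors agree, every edge of
   G outside G' can be answered at its right end by an edge of G' outside G,
   and that one at its left end by a further edge of G outside G', and so on.
   Following this alternating walk from left vertex to left vertex, some set
   I of left vertices is permuted by the walk; the G-edges leaving I and the
   G'-edges entering I are then two different perfect matchings between I
   and the same set of right vertices. *)
From mathcomp Require Import all_boot.
Set Implicit Arguments. Unset Strict Implicit. Unset Printing Implicit Defensive.

(* A nonempty set of least size among the nonempty f-stable subsets of L. *)
Lemma exists_imset_fixed (T : finType) (f : T -> T) (L : {set T}) :
  L != set0 -> f @: L \subset L ->
  exists I : {set T}, [/\ I \subset L, I != set0 & f @: I = I].
Proof.
move=> nzL fL.
have exL : exists k, [exists A : {set T},
    [&& A \subset L, A != set0, f @: A \subset A & #|A| == k]].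
  by exists #|L|; apply/existsP; exists L; rewrite subxx nzL fL eqxx.
case: (ex_minnP exL) => k /existsP [A /and4P [sAL nzA fA /eqP cardA]] minA.
exists A; split => //; apply/eqP; rewrite eqEcard fA cardA; apply: minA.
apply/existsP; exists (f @: A).
by rewrite (subset_trans fA sAL) imset_eq0 nzA imsetS ?eqxx.
Qed.

Lemma setD_exchange (T : finType) (A B : {set T}) (p : pred T) :
  #|[set x in A | p x]| = #|[set x in B | p x]| ->
  (exists2 x, x \in A :\: B & p x) -> exists2 y, y \in B :\: A & p y.
Proof.
move=> eq_card [x xAB px].
have : 0 < #|[set y in B | p y] :\: [set x in A | p x]|.
  rewrite cardsD setIC -eq_card -cardsD; apply/card_gt0P; exists x.
  by move: xAB; rewrite !inE px andbT => /andP [-> ->].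
case/card_gt0P => y; rewrite !inE => /andP [yA /andP [yB py]].
by exists y; rewrite // inE yB andbT; move: yA; rewrite py andbT.
Qed.

Lemma card_imset_fiber (T U V : finType) (I : {set T}) (m : T -> U)
    (k : U -> V) (x0 : T) :
  x0 \in I -> {in I &, injective (k \o m)} ->
  #|[set u in m @: I | k u == k (m x0)]| = 1.
Proof.
move=> x0I inj_km; apply/eqP/cards1P; exists (m x0); apply/setP => u.
rewrite !inE; apply/andP/eqP => [[/imsetP [x xI ->] /eqP ekm]|->].
  by rewrite (inj_km _ _ xI x0I ekm).
by split; [apply: imset_f|].
Qed.

Lemma perfect_matching_imset n d (I : {set 'I_n}) (a : 'I_n -> 'I_n)
    (b : 'I_n -> 'I_d) :
  {in I &, injective a} -> {in I &, injective b} -> a @: I = I ->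
  perfect_matching [set (a x, b x) | x in I] I (b @: I).
Proof.
move=> inj_a inj_b aI; split.
- by move=> _ /imsetP [x xI ->] /=; rewrite -{1}aI !imset_f.
- by move=> i; rewrite -{1}aI => /imsetP [x xI ->]; exact: card_imset_fiber.
- by move=> _ /imsetP [x xI ->]; exact: card_imset_fiber.
Qed.

Lemma alternating_not_compatible n d (G G' : graph n d) (L : {set 'I_n})
    (r : 'I_n -> 'I_d) (l : 'I_d -> 'I_n) :
  L != set0 ->
  {in L, forall i, (i, r i) \in G :\: G'} ->
  {in L, forall i, (l (r i), r i) \in G' /\ l (r i) \in L} ->
  ~ compatible G G'.
Proof.
move=> nzL hr hl compGG'.
have fL : (l \o r) @: L \subset L.
  by apply/subsetP => _ /imsetP [i iL ->]; case: (hl i iL).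
have [I [sIL /set0Pn [x0 x0I] fI]] := exists_imset_fixed nzL fL.
have inj_f : {in I &, injective (l \o r)} by apply/imset_injP; rewrite fI.
have inj_r : {in I &, injective r}.
  by move=> x y xI yI exy; apply: inj_f => //=; rewrite exy.
pose M := [set (id x, r x) | x in I].
pose M' := [set ((l \o r) x, r x) | x in I].
have pmM : contains_pm G M I (r @: I).
  split; last by apply: perfect_matching_imset; rewrite ?imset_id.
  apply/subsetP => _ /imsetP [x xI ->].
  by have := hr x (subsetP sIL x xI); rewrite inE => /andP [].
have pmM' : contains_pm G' M' I (r @: I).
  split; last exact: perfect_matching_imset.
  by apply/subsetP => _ /imsetP [x xI ->]; case: (hl x (subsetP sIL x xI)).
have eqMM' : M = M' := compGG' _ _ _ _ pmM pmM'.
have : (x0, r x0) \in G'.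
  by case: pmM' => /subsetP -> //; rewrite -eqMM' imset_f.
by have := hr x0 (subsetP sIL x0 x0I); rewrite inE => /andP [/negP].
Qed.

Lemma not_compatible_of_setD n d (G G' : graph n d) (e0 : 'I_n * 'I_d) :
  e0 \in G :\: G' -> LD G =1 LD G' -> RD G =1 RD G' -> ~ compatible G G'.
Proof.
move=> e0D eqLD eqRD.
pose L := [set i | [exists j, (i, j) \in G :\: G']].
pose r i := odflt e0.2 [pick j | (i, j) \in G :\: G'].
pose l j := odflt e0.1 [pick i | (i, j) \in G' :\: G].
have hr : {in L, forall i, (i, r i) \in G :\: G'}.
  move=> i; rewrite inE => /existsP [j ijD]; rewrite /r.
  by case: pickP => [//|/(_ j)]; rewrite ijD.
apply: (@alternating_not_compatible _ _ G G' L r l).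
- apply/set0Pn; exists e0.1; rewrite inE; apply/existsP; exists e0.2.
  by rewrite -surjective_pairing.
- exact: hr.
move=> i iL.
have [e eD' /eqP er] : exists2 e, e \in G' :\: G & e.2 == r i.
  by apply: setD_exchange (eqRD (r i)) _; exists (i, r i); rewrite ?hr.
have lD' : (l (r i), r i) \in G' :\: G.
  rewrite /l; case: pickP => [//|/(_ e.1)].
  by rewrite -er -surjective_pairing eD'.
have [e' e'D /eqP el] : exists2 e, e \in G :\: G' & e.1 == l (r i).
  by apply: setD_exchange (esym (eqLD (l (r i)))) _; exists (l (r i), r i).
split; first by move: lD'; rewrite inE => /andP [].
by rewrite inE; apply/existsP; exists e'.2; rewrite -el -surjective_pairing.
Qed.

Lemma compatible_sym n d (G G' : graph n d) :
  compatible G G' -> compatible G' G.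
Proof. by move=> compGG' I J M M' pmM pmM'; rewrite (compGG' I J M' M). Qed.

Theorem mainTheorem2 (n d : nat) (G G' : graph n d) :
  acyclic G -> acyclic G' -> G != G' ->
  LD G =1 LD G' -> RD G =1 RD G' ->
  ~ compatible G G'.
Proof.
move=> _ _ neqGG' eqLD eqRD.
have [/set0Pn [e eD] | ] := boolP (G :\: G' != set0).
  exact: not_compatible_of_setD eD eqLD eqRD.
rewrite negbK setD_eq0 => sGG'.
have /set0Pn [e eD] : G' :\: G != set0.
  by rewrite setD_eq0; apply: contra neqGG' => sG'G; rewrite eqEsubset sGG'.
move/compatible_sym; apply: (not_compatible_of_setD eD) => x.
  by rewrite eqLD.
by rewrite eqRD.
Qed.
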